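(* Let $n\ge 3$, let $a_0,\ldots,a_{n-1}$ be indeterminates over $\mathbb{Q}$, $f=x^n+a_{n-1}x^{n-1}+\cdots+a_0$, and \[f_1(x,y)=\frac{f(y)-f(x)}{y-x},\qquad f_3(x,y)=\frac{f(y)-2f\left(\frac{x+y}{2}\right)+f(x)}{\frac{(y-x)^2}{2}}.\] Let $D_2\in\mathbb{Q}[a_0,\ldots,a_{n-1}]$ be the polynomial obtained by expressing $\prod_{1\le i,j,k\le n,\ i<j,\ j\ne k,\ k\ne i}(2r_k-r_i-r_j)$ ($r_1,\ldots,r_n$ the roots of $f$) in terms of $a_0,\ldots,a_{n-1}$ via Vieta's formulas. Then, in the polynomial ring $\mathbb{Q}[a_0,\ldots,a_{n-1},x,y]$, \[D_2\in\langle f(x),f_1(x,y),f_3(x,y)\rangle\cap\mathbb{Q}[a_0,\ldots,a_{n-1}].\]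
   Context: $\langle g_1,\ldots,g_m\rangle$ denotes the ideal generated by $g_1,\ldots,g_m$. *)

From HB Require Import structures.
From mathcomp Require Import all_boot all_order all_algebra.
From mathcomp Require Export mpoly.
Set Implicit Arguments. Unset Strict Implicit. Unset Printing Implicit Defensive.
Import Order.TTheory GRing.Theory Num.Theory.
Local Open Scope ring_scope.

(* The ambient ring Q[a_0,...,a_{n-1},x,y] is {mpoly rat[n.+2]}:
   variable i < n is a_i, variable n is x, variable n+1 is y. *)
Definition avar (n : nat) (i : 'I_n) : {mpoly rat[n.+2]} := 'X_(inord i).
Definition xvar (n : nat) : {mpoly rat[n.+2]} := 'X_(inord n).
Definition yvar (n : nat) : {mpoly rat[n.+2]} := 'X_(inord n.+1).

Definition avars (n : nat) : n.-tuple {mpoly rat[n.+2]} := [tuple avar i | i < n].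

Definition fgen (n : nat) (t : {mpoly rat[n.+2]}) : {mpoly rat[n.+2]} :=
  t ^+ n + \sum_(i < n) avar i * t ^+ i.

(* f1 is the quotient (f(y)-f(x))/(y-x) in the (integral domain) big ring. *)
Definition is_f1 (n : nat) (g : {mpoly rat[n.+2]}) : Prop :=
  (yvar n - xvar n) * g = fgen (yvar n) - fgen (xvar n).

Definition is_f3 (n : nat) (g : {mpoly rat[n.+2]}) : Prop :=
  ((2%:R : rat)^-1 *: (yvar n - xvar n) ^+ 2) * g =
  fgen (yvar n) - 2%:R * fgen ((2%:R : rat)^-1 *: (xvar n + yvar n)) + fgen (xvar n).

Definition vieta (n : nat) : n.-tuple {mpoly rat[n]} :=
  [tuple ((-1) ^+ (n - i)%N *: mesym n rat (n - i)%N) | i < n].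

Definition root_prod (n : nat) : {mpoly rat[n]} :=
  \prod_(i < n) \prod_(j < n | (i < j)%N)
     \prod_(k < n | (k != i) && (k != j)) (2%:R * 'X_k - 'X_i - 'X_j).

Definition is_D2 (n : nat) (D : {mpoly rat[n]}) : Prop :=
  D \mPo vieta n = root_prod n.

Definition in_ideal3 (k : nat) (g1 g2 g3 p : {mpoly rat[k]}) : Prop :=
  exists c1 c2 c3 : {mpoly rat[k]}, p = c1 * g1 + c2 * g2 + c3 * g3.

Definition in_coeff_ring (n : nat) (p : {mpoly rat[n.+2]}) : Prop :=
  exists q : {mpoly rat[n]}, p = q \mPo avars n.

From HB Require Import structures.
From mathcomp Require Import all_boot all_order all_algebra.
From mathcomp Require Import fingroup perm mpoly ring zify.
Set Implicit Arguments. Unset Strict Implicit. Unset Printing Implicit Defensive.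
Import GRing.Theory Num.Theory Pdiv.CommonRing.
Local Open Scope ring_scope.

(** Let A = Q[a_0, ..., a_(n-1)] and let the roots r_1, ..., r_n be indeterminates:
    Vieta's substitution A -> Q[r] is injective and its image is the ring of
    symmetric polynomials.  Read Q[a, x, y] as A[x][y].  An element of A[x][y]
    vanishing at every (r_i, r_j) with i <> j lies in <f(x), f1>: divide it by
    f1, which is monic of degree n - 1 in y, then divide the coefficients of the
    remainder by f(x); what is left has too small a degree to vanish at all these
    points unless it is 0.  At (r_i, r_j), f3 takes the value
    e_ij = prod_(k <> i, j) ((r_i + r_j)/2 - r_k), so with
    Pi(t) = prod_(i < j) (t - e_ij), the element Pi(f3) vanishes at all these
    points, and Pi(f3) = Pi(0) modulo f3.  Pi has symmetric coefficients (Pi^2 is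
    visibly symmetric and Pi is monic), hence comes from A[t], and Pi(0) is a
    constant multiple of the image of D2. *)

(* [P : {poly {poly A}}] is read as P(x, y) with x = 'X%:P and y = 'X, so that
   p%:P is p(x) and p^:P is p(y); [eval2 phi a b P] is P^phi(a, b). *)
Section BivariateEvaluation.
Variables (A S : comNzRingType) (phi : {rmorphism A -> S}) (a b : S).

Definition eval2 : {rmorphism {poly {poly A}} -> S} :=
  horner_eval b \o map_poly (horner_eval a \o map_poly phi).

Lemma eval2E P : eval2 P = (map_poly (horner_eval a \o map_poly phi) P).[b].
Proof. by []. Qed.

Lemma eval2X : eval2 'X = b.
Proof. by rewrite eval2E map_polyX hornerX. Qed.

Lemma eval2C p : eval2 p%:P = (map_poly phi p).[a].
Proof. by rewrite eval2E map_polyC hornerC. Qed.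

Lemma eval2XC : eval2 'X%:P = a.
Proof. by rewrite eval2C map_polyX hornerX. Qed.

Lemma eval2CC c : eval2 c%:P%:P = phi c.
Proof. by rewrite eval2C map_polyC hornerC. Qed.

Lemma eval2_comp (p : {poly A}) t : eval2 (p^:P \Po t) = (map_poly phi p).[eval2 t].
Proof.
rewrite /comp_poly -map_poly_comp -horner_map /= -map_poly_comp.
by congr _.[_]; apply: eq_map_poly => c; exact: eval2CC.
Qed.

Lemma eval2_map_polyC p : eval2 p^:P = (map_poly phi p).[b].
Proof. by rewrite -[p^:P]comp_polyXr eval2_comp eval2X. Qed.

End BivariateEvaluation.

Lemma map_polyC_compXC (R : nzRingType) (p : {poly R}) : p^:P \Po 'X%:P = p%:P.
Proof. by rewrite comp_polyCr -/(comp_poly _ _) comp_polyXr. Qed.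

Section Midpoint.
Variables (R : comNzRingType) (h : R).
Hypothesis h_half : h * 2%:R = 1.

Lemma double_sub_midpoint a b c : 2%:R * c - a - b = - 2%:R * (h * (a + b) - c).
Proof.
transitivity (- 2%:R * (h * (a + b) - c) + (h * 2%:R - 1) * (a + b)); first by ring.
by rewrite h_half subrr mul0r addr0.
Qed.

Lemma midpoint_sub_sqr a b :
  - (2%:R * ((h * (a + b) - a) * (h * (a + b) - b))) = h * ((b - a) * (b - a)).
Proof.
transitivity (h * ((b - a) * (b - a)) + (h * 2%:R - 1) * (2%:R * a * b - h * (a + b) ^+ 2)).
  by ring.
by rewrite h_half subrr mul0r addr0.
Qed.

End Midpoint.

Lemma rdivp_coef_eq (B : comNzRingType) (d : {poly B}) (P : {poly {poly B}}) :
  d \is monic ->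
  P = map_poly (fun c => rdivp c d) P * d%:P + map_poly (fun c => rmodp c d) P.
Proof.
move=> d_monic; apply/polyP => k.
rewrite coefD coefMC !coef_map_id0 ?rdiv0p ?rmod0p //.
exact: Pdiv.RingMonic.rdivp_eq.
Qed.

Section RootProducts.
Variables (R : comNzRingType) (n : nat) (r : 'I_n -> R).

Definition root_prod_of : R :=
  \prod_(i < n) \prod_(j < n | (i < j)%N)
     \prod_(k < n | (k != i) && (k != j)) (2%:R * r k - r i - r j).

Definition f3_root_value (h : R) (i j : 'I_n) : R :=
  \prod_(k < n | (k != i) && (k != j)) (h * (r i + r j) - r k).

Definition f3_values_poly (h : R) : {poly R} :=
  \prod_(i < n) \prod_(j < n | (i < j)%N) ('X - (f3_root_value h i j)%:P).

Lemma f3_root_valueC h i j : f3_root_value h i j = f3_root_value h j i.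
Proof. by rewrite /f3_root_value addrC; apply: eq_bigl => k; rewrite andbC. Qed.

Lemma root_f3_values_poly h i j :
  i != j -> root (f3_values_poly h) (f3_root_value h i j).
Proof.
wlog lt_ij : i j / (i < j)%N => [wlog_ij ij|_].
  case: (ltngtP i j) => [lt_ij|lt_ji|/val_inj eq_ij].
  - exact: wlog_ij.
  - by rewrite f3_root_valueC; apply: wlog_ij; rewrite // eq_sym.
  - by rewrite eq_ij eqxx in ij.
rewrite /root /f3_values_poly horner_prod (bigD1 i) //= horner_prod (bigD1 j) //=.
by rewrite hornerXsubC subrr !mul0r.
Qed.

End RootProducts.

Section DistinctRoots.
Variables (A R : idomainType) (phi : {rmorphism A -> R}).
Hypothesis phi_inj : injective phi.
Variables (n : nat) (r : 'I_n -> R).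
Hypothesis r_inj : injective r.

Local Notation ev i j := (eval2 phi (r i) (r j)).

Lemma roots_on_eq0 (J : {set 'I_n}) (q : {poly R}) :
  (size q <= #|J|)%N -> {in J, forall j, root q (r j)} -> q = 0.
Proof.
move=> sq qJ; apply: (roots_geq_poly_eq0 (rs := [seq r j | j <- enum J])).
- by apply/allP => x /mapP[j + ->]; rewrite mem_enum => /qJ.
- by rewrite map_inj_uniq ?enum_uniq.
- by rewrite size_map -cardE.
Qed.

Lemma offdiag_roots_eq0 (P : {poly {poly A}}) :
  (size P < n)%N -> (forall k, (size (P`_k)%R <= n)%N) ->
  (forall i j, i != j -> ev i j P = 0) -> P = 0.
Proof.
move=> sP sPk P0; apply/polyP => k; rewrite coef0.
apply: (map_inj_poly phi_inj (rmorph0 _)); rewrite map_poly0.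
apply: (roots_on_eq0 (J := setT)) => [|i _].
  by rewrite size_map_inj_poly ?rmorph0 // cardsT card_ord.
pose P_ri := map_poly (horner_eval (r i) \o map_poly phi) P.
have -> : root (map_poly phi P`_k) (r i) = (P_ri`_k == 0) by rewrite coef_map.
suff -> : P_ri = 0 by rewrite coef0.
apply: (roots_on_eq0 (J := [set~ i])) => [|j].
  rewrite cardsC1 card_ord -ltnS (ltn_predK sP).
  exact: leq_ltn_trans (size_poly _ _) sP.
by rewrite !inE eq_sym => /P0 Pij; apply/rootP.
Qed.

Variable f : {poly A}.
Hypothesis f_roots : map_poly phi f = \prod_(i < n) ('X - (r i)%:P).
Hypothesis n_gt0 : (0 < n)%N.

Lemma f_monic : f \is monic.
Proof.
apply/monicP/phi_inj; rewrite -lead_coef_map_inj ?rmorph0 // f_roots rmorph1.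
exact/monicP/monic_prod_XsubC.
Qed.

Lemma size_f : size f = n.+1.
Proof.
rewrite -(size_map_inj_poly phi_inj (rmorph0 _)) f_roots size_prod_XsubC.
by rewrite -[index_enum _]enumT size_enum_ord.
Qed.

Lemma root_f i : root (map_poly phi f) (r i).
Proof.
by rewrite f_roots /root horner_prod (bigD1 i) //= hornerXsubC subrr mul0r.
Qed.

Lemma size_fx_lt_fy : (size (- f%:P : {poly {poly A}}) < size f^:P)%N.
Proof. by rewrite size_map_polyC size_polyN size_polyC size_f ltnS (leq_trans (leq_b1 _)). Qed.

Lemma fdiff_monic : f^:P - f%:P \is monic.
Proof.
rewrite monicE lead_coefDl ?size_fx_lt_fy // lead_coef_map_inj ?(monicP f_monic) //.
exact: polyC_inj.
Qed.

Lemma size_fdiff : size (f^:P - f%:P) = n.+1.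
Proof. by rewrite size_polyDl ?size_fx_lt_fy // size_map_polyC size_f. Qed.

Variable F1 : {poly {poly A}}.
Hypothesis F1_def : ('X - 'X%:P) * F1 = f^:P - f%:P.

Lemma F1_monic : F1 \is monic.
Proof. by rewrite -(monicMl F1 (monicXsubC 'X)) F1_def fdiff_monic. Qed.

Lemma size_F1 : size F1 = n.
Proof.
have := size_fdiff; rewrite -F1_def size_monicM ?monicXsubC ?monic_neq0 ?F1_monic //.
by rewrite size_XsubC => -[].
Qed.

Lemma ev_F1 i j : i != j -> ev i j F1 = 0.
Proof.
move=> ij; have /eqP := congr1 (ev i j) F1_def.
rewrite rmorphM !rmorphB eval2X eval2XC eval2C.
rewrite -[f^:P]comp_polyXr eval2_comp eval2X (rootP (root_f i)) (rootP (root_f j)).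
rewrite subrr mulf_eq0 subr_eq0 => /orP[/eqP/r_inj/eqP|/eqP //].
by rewrite eq_sym (negbTE ij).
Qed.

Lemma offdiag_roots_in_ideal (P : {poly {poly A}}) :
  (forall i j, i != j -> ev i j P = 0) -> exists u v, P = u * f%:P + v * F1.
Proof.
move=> P0.
set q := rdivp P F1; set rho := rmodp P F1.
set u := map_poly (fun c => rdivp c f) rho.
set tau := map_poly (fun c => rmodp c f) rho.
have P_eq : P = q * F1 + (u * f%:P + tau).
  by rewrite -rdivp_coef_eq ?f_monic // -Pdiv.RingMonic.rdivp_eq // F1_monic.
suff tau0 : tau = 0 by exists u, q; rewrite P_eq tau0 addr0 addrC.
apply: offdiag_roots_eq0 => [|k|i j ij].
- rewrite -size_F1; apply: leq_ltn_trans (size_poly _ _) _.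
  by rewrite ltn_rmodp monic_neq0 ?F1_monic.
- rewrite coef_map_id0 ?rmod0p // -ltnS -size_f.
  by rewrite ltn_rmodp monic_neq0 ?f_monic.
have /eqP := congr1 (ev i j) P_eq.
rewrite P0 // !rmorphD !rmorphM ev_F1 // eval2C (rootP (root_f i)).
by rewrite !mulr0 !add0r eq_sym => /eqP.
Qed.

Variable hA : A.
Hypothesis hA_half : hA * 2%:R = 1.
Variable F3 : {poly {poly A}}.
Hypothesis F3_def : (hA%:P%:P * ('X - 'X%:P) ^+ 2) * F3 =
  f^:P - 2%:R * (f^:P \Po (hA%:P%:P * ('X%:P + 'X))) + f%:P.

Local Notation e := (f3_root_value r (phi hA)).
Local Notation Pi := (f3_values_poly r (phi hA)).

Lemma phi_hA_half : phi hA * 2%:R = 1.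
Proof. by rewrite -(rmorph_nat phi) -rmorphM hA_half rmorph1. Qed.

Lemma ev_F3 i j : i != j -> ev i j F3 = e i j.
Proof.
move=> ij; set h := phi hA; set m := h * (r i + r j).
have h_neq0 : h != 0.
  by apply/eqP => h0; move/eqP: phi_hA_half; rewrite -/h h0 mul0r eq_sym oner_eq0.
have rji : r j - r i != 0 by rewrite subr_eq0 (inj_eq r_inj) eq_sym.
have f_mid : - (2%:R * (map_poly phi f).[m]) = h * ((r j - r i) * (r j - r i)) * e i j.
  rewrite f_roots horner_prod (bigD1 i) //= (bigD1 j) /=; last by rewrite eq_sym.
  rewrite !hornerXsubC [in LHS]mulrA [in LHS]mulrA -mulNr -(mulrA 2%:R) /m.
  rewrite (midpoint_sub_sqr phi_hA_half).
  by congr (_ * _); apply: eq_bigr => k _; rewrite hornerXsubC.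
have := congr1 (ev i j) F3_def.
rewrite !rmorphD !rmorphM !rmorphB rmorphN rmorphM rmorph_nat eval2_comp !rmorphM rmorphD.
rewrite eval2X eval2XC !eval2CC !eval2C !eval2_map_polyC -/h -/m.
rewrite (rootP (root_f i)) (rootP (root_f j)) sub0r addr0 f_mid.
by move/mulfI; apply; rewrite !mulf_neq0.
Qed.

Lemma const_coef_in_ideal (PA : {poly A}) :
  (forall i j, i != j -> root (map_poly phi PA) (e i j)) ->
  exists u v w, PA.[0]%:P%:P = u * f%:P + v * F1 + w * F3.
Proof.
move=> PA_roots.
have [u [v PAF3_eq]] : exists u v, PA^:P \Po F3 = u * f%:P + v * F1.
  by apply: offdiag_roots_in_ideal => i j ij; rewrite eval2_comp ev_F3 //; apply/rootP/PA_roots.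
have PA_eq : PA = PA.[0]%:P + drop_poly 1 PA * 'X.
  rewrite -{1}(poly_take_drop 1 PA) horner_coef0 expr1; congr (_ + _).
  by apply/polyP => -[|k]; rewrite coef_take_poly coefC.
exists u, v, (- ((drop_poly 1 PA)^:P \Po F3)).
rewrite -PAF3_eq {2}PA_eq rmorphD rmorphM /= map_polyC map_polyX.
by rewrite comp_polyD comp_polyC comp_polyM comp_polyX mulNr addrK.
Qed.

Lemma root_prod_of_f3_values : exists c : A, root_prod_of r = phi c * Pi.[0].
Proof.
exists (\prod_(i < n) \prod_(j < n | (i < j)%N) - \prod_(k < n | (k != i) && (k != j)) (- 2%:R)).
rewrite rmorph_prod /f3_values_poly horner_prod -big_split /=; apply: eq_bigr => i _.
rewrite rmorph_prod horner_prod -big_split /=; apply: eq_bigr => j _.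
rewrite hornerXsubC sub0r rmorphN mulrNN rmorph_prod -big_split /=; apply: eq_bigr => k _.
by rewrite rmorphN rmorph_nat (double_sub_midpoint phi_hA_half).
Qed.

Theorem root_prod_in_ideal (D : A) (PA : {poly A}) :
  phi D = root_prod_of r -> map_poly phi PA = Pi ->
  exists u v w, D%:P%:P = u * f%:P + v * F1 + w * F3.
Proof.
move=> D_eq PA_eq; have [c Dc] := root_prod_of_f3_values.
have [u [v [w uvw]]] : exists u v w, PA.[0]%:P%:P = u * f%:P + v * F1 + w * F3.
  by apply: const_coef_in_ideal => i j ij; rewrite PA_eq root_f3_values_poly.
have -> : D = c * PA.[0] by apply: phi_inj; rewrite rmorphM -horner_map rmorph0 PA_eq -Dc.
exists (c%:P%:P * u), (c%:P%:P * v), (c%:P%:P * w).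
by rewrite !polyCM uvw !mulrDr !mulrA.
Qed.

End DistinctRoots.

Lemma eq_rmorph_mpoly k (R : comNzRingType) (S : comNzRingType)
    (f g : {rmorphism {mpoly R[k]} -> S}) :
  (forall c, f c%:MP = g c%:MP) -> (forall i, f 'X_i = g 'X_i) -> f =1 g.
Proof.
move=> fgC fgX p; rewrite [p]mpolyE !rmorph_sum; apply: eq_bigr => m _.
rewrite -mul_mpolyC !rmorphM fgC mpolyXE_id !rmorph_prod; congr (_ * _).
by apply: eq_bigr => i _; rewrite !rmorphXn fgX.
Qed.

Lemma comp_mpolyA k l m (R : comNzRingType) (p : {mpoly R[k]})
    (t : k.-tuple {mpoly R[l]}) (u : l.-tuple {mpoly R[m]}) :
  (p \mPo t) \mPo u = p \mPo [tuple tnth t i \mPo u | i < k].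
Proof.
apply: (@eq_rmorph_mpoly _ _ _ (comp_mpoly u \o comp_mpoly t)) => [c|i] /=.
  by rewrite !comp_mpolyC.
by rewrite !comp_mpolyXU -!tnth_nth tnth_mktuple.
Qed.

Section VietaSubstitution.
Variable n : nat.
Local Notation esym := [tuple mesym n rat i.+1 | i < n].

Lemma vietaE (i : 'I_n) : tnth (vieta n) i = (-1) ^+ (n - i) *: mesym n rat (n - i).
Proof. exact: tnth_mktuple. Qed.

(* [vieta n] is [e_1; ...; e_n] reversed and with alternating signs. *)
Definition esym_of_vieta : n.-tuple {mpoly rat[n]} :=
  [tuple (-1) ^+ i.+1 *: 'X_(rev_ord i) | i < n].
Definition vieta_of_esym : n.-tuple {mpoly rat[n]} :=
  [tuple (-1) ^+ (n - i) *: 'X_(rev_ord i) | i < n].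

Lemma sign_sqr k : (-1) ^+ k * (-1) ^+ k = 1 :> rat.
Proof. by rewrite -exprMn mulrNN mulr1 expr1n. Qed.

Lemma esym_of_vietaK : [tuple tnth esym_of_vieta i \mPo vieta n | i < n] = esym.
Proof.
apply: eq_from_tnth => i; rewrite !tnth_mktuple comp_mpolyZ comp_mpolyXU -tnth_nth vietaE /=.
by rewrite subKn // scalerA sign_sqr scale1r.
Qed.

Lemma vieta_of_esymK : [tuple tnth vieta_of_esym i \mPo esym | i < n] = vieta n.
Proof.
apply: eq_from_tnth => i; rewrite !tnth_mktuple comp_mpolyZ comp_mpolyXU -tnth_nth.
by rewrite tnth_mktuple /= subnSK.
Qed.

Lemma vieta_of_esymKV :
  [tuple tnth vieta_of_esym i \mPo esym_of_vieta | i < n] = [tuple 'X_i | i < n].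
Proof.
apply: eq_from_tnth => i; rewrite !tnth_mktuple comp_mpolyZ comp_mpolyXU -tnth_nth.
by rewrite tnth_mktuple rev_ordK /= scalerA subnSK // sign_sqr scale1r.
Qed.

Lemma vieta_inj : injective (comp_mpoly (vieta n)).
Proof.
move=> p q /eqP; rewrite -subr_eq0 -raddfB => /eqP pq0; apply/eqP; rewrite -subr_eq0.
set t := p - q in pq0 *.
have t_esym : (t \mPo vieta_of_esym) \mPo esym = 0 by rewrite comp_mpolyA vieta_of_esymK.
have := comp_mpolyA t vieta_of_esym esym_of_vieta.
by rewrite vieta_of_esymKV comp_mpoly_id (msym_fundamental_un0 t_esym) comp_mpoly0 => <-.
Qed.

Definition vieta_lift (p : {mpoly rat[n]}) : {mpoly rat[n]} := symf p \mPo esym_of_vieta.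

Lemma vieta_lift0 : vieta_lift 0 = 0.
Proof. by rewrite /vieta_lift /symf symfnE0 comp_mpoly0. Qed.

Lemma vieta_liftK p : p \is symmetric -> vieta_lift p \mPo vieta n = p.
Proof. by move=> p_sym; rewrite comp_mpolyA esym_of_vietaK -symfP. Qed.

Lemma sym_coef_poly_lift (P : {poly {mpoly rat[n]}}) :
  (forall k, P`_k \is symmetric) ->
  map_poly (comp_mpoly (vieta n)) (map_poly vieta_lift P) = P.
Proof.
move=> P_sym; apply/polyP => k.
by rewrite coef_map /= coef_map_id0 ?vieta_lift0 // vieta_liftK.
Qed.

End VietaSubstitution.

Section PairProducts.
Variables (R : comNzRingType) (n : nat) (g : 'I_n -> 'I_n -> R).

Lemma prod_ltn_sqr : (forall i j, g i j = g j i) ->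
  (\prod_(i < n) \prod_(j < n | (i < j)%N) g i j) ^+ 2 =
  \prod_(i < n) \prod_(j < n | j != i) g i j.
Proof.
move=> gC; have split_i i : \prod_(j < n | j != i) g i j =
    \prod_(j < n | (i < j)%N) g i j * \prod_(j < n | (j < i)%N) g j i.
  rewrite (bigID (fun j : 'I_n => (i < j)%N)) /=; congr (_ * _).
    by apply: eq_bigl => j; rewrite andb_idl // => /ltn_eqF; rewrite -val_eqE eq_sym => ->.
  by apply: eq_big => [j|j _]; [rewrite -leqNgt ltn_neqAle andbC -val_eqE | exact: gC].
rewrite (eq_bigr _ (fun i _ => split_i i)) big_split expr2 /=; congr (_ * _).
by rewrite (exchange_big_dep xpredT) //=.
Qed.

Lemma prod_neq_perm (s : 'S_n) :
  \prod_(i < n) \prod_(j < n | j != i) g (s i) (s j) =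
  \prod_(i < n) \prod_(j < n | j != i) g i j.
Proof.
rewrite [RHS](reindex_inj (@perm_inj _ s)); apply: eq_bigr => i _.
by rewrite [RHS](reindex_inj (@perm_inj _ s)); apply: eq_bigl => j; rewrite (inj_eq perm_inj).
Qed.

End PairProducts.

Lemma monic_sqr_inj (R : idomainType) (p q : {poly R}) :
  2%:R != 0 :> R -> p \is monic -> q \is monic -> p ^+ 2 = q ^+ 2 -> p = q.
Proof.
move=> two_neq0 p_monic q_monic /eqP.
rewrite -subr_eq0 subr_sqr mulf_eq0 subr_eq0 addr_eq0 => /orP[/eqP //|/eqP p_eq].
have := congr1 lead_coef p_eq; rewrite lead_coefN (monicP p_monic) (monicP q_monic).
by move/eqP; rewrite -addr_eq0 -mulr2n (negbTE two_neq0).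
Qed.

Lemma msymXU n (R : comNzRingType) (s : 'S_n) i : msym s ('X_i : {mpoly R[n]}) = 'X_(s i).
Proof. by rewrite /msym mmapX mmap1U. Qed.

Lemma msymC n (R : comNzRingType) (s : 'S_n) c : msym s (c%:MP : {mpoly R[n]}) = c%:MP.
Proof. by rewrite /msym mmapC. Qed.

Section SymmetricF3Values.
Variables (n : nat) (c : rat).
Local Notation e := (f3_root_value (fun k : 'I_n => ('X_k : {mpoly rat[n]})) c%:MP).
Local Notation Pi := (f3_values_poly (fun k : 'I_n => ('X_k : {mpoly rat[n]})) c%:MP).

Lemma msym_f3_root_value s i j : msym s (e i j) = e (s i) (s j).
Proof.
rewrite rmorph_prod [RHS](reindex_inj (@perm_inj _ s)) /=.
apply: eq_big => [k|k _]; first by rewrite !(inj_eq perm_inj).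
by rewrite rmorphB rmorphM rmorphD /= !msymXU msymC.
Qed.

Lemma f3_values_poly_sqr :
  Pi ^+ 2 = \prod_(i < n) \prod_(j < n | j != i) ('X - (e i j)%:P).
Proof. by apply: prod_ltn_sqr => i j; rewrite f3_root_valueC. Qed.

Lemma msym_f3_values_poly s : map_poly (msym s) Pi = Pi.
Proof.
have Pi_monic : Pi \is monic by apply: monic_prod => i _; apply: monic_prod_XsubC.
apply: monic_sqr_inj; rewrite ?monic_map //.
  by rewrite -mpolyC_nat mpolyC_eq0 pnatr_eq0.
rewrite -rmorphXn f3_values_poly_sqr -[RHS](prod_neq_perm _ s) rmorph_prod.
apply: eq_bigr => i _; rewrite rmorph_prod; apply: eq_bigr => j _.
by rewrite rmorphB /= map_polyX map_polyC; congr ('X - _%:P); apply: msym_f3_root_value.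
Qed.

Lemma f3_values_poly_coef_sym k : Pi`_k \is symmetric.
Proof. by apply/issymP => s; rewrite -coef_map msym_f3_values_poly. Qed.

End SymmetricF3Values.

Section GenericPolynomial.
Variable n : nat.
Local Notation phi := (comp_mpoly (vieta n)).

Lemma mpolyX_inj : injective (fun i : 'I_n => ('X_i : {mpoly rat[n]})).
Proof.
move=> i j /(congr1 (mcoeff U_(i)%MM)); rewrite !mcoeffXU eqxx.
by case: eqVneq => // _ /eqP; rewrite eq_sym oner_eq0.
Qed.

Lemma meval_mesymX k : (mesym n {mpoly rat[n]} k).@[fun i => 'X_i] = mesym n rat k.
Proof.
by rewrite !mesymE raddf_sum /=; apply: eq_bigr => m _; rewrite mevalX mpolyXE_id.
Qed.

Lemma prod_XsubX_coef (j : 'I_n) :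
  (\prod_(i < n) ('X - ('X_i)%:P) : {poly {mpoly rat[n]}})`_j = tnth (vieta n) j.
Proof.
set X := [tuple ('X_i : {mpoly rat[n]}) | i < n].
have -> : \prod_(i < n) ('X - ('X_i)%:P) = \prod_(c <- X) ('X - c%:P).
  by rewrite big_tuple; apply: eq_bigr => i _; rewrite tnth_mktuple.
have := mroots_coeff X (inord (n - j)).
rewrite inordK ?ltnS ?leq_subr // subKn 1?ltnW // => ->.
rewrite vietaE -mul_mpolyC rmorph_sign; congr (_ * _).
by rewrite -meval_mesymX; apply: meval_eq => i; rewrite tnth_mktuple.
Qed.

Definition generic_poly : {poly {mpoly rat[n]}} := 'X^n + \sum_(i < n) ('X_i)%:P * 'X^i.

Lemma generic_poly_roots : map_poly phi generic_poly = \prod_(i < n) ('X - ('X_i)%:P).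
Proof.
set P := \prod_(i < n) _.
have P_monic : P \is monic by apply: monic_prod_XsubC.
have size_P : size P = n.+1 by rewrite size_prod_XsubC -[index_enum _]enumT size_enum_ord.
rewrite rmorphD rmorphXn rmorph_sum /= map_polyX; apply/polyP => j.
rewrite coefD coefXn coef_sum.
under eq_bigr do rewrite rmorphM /= map_polyC map_polyXn coefCM coefXn.
have coef_neq (i : nat) (k : 'I_n) : i != k -> phi 'X_k * (i == k)%:R = 0.
  by move/negbTE->; rewrite mulr0.
case: (ltngtP j n) => [lt_jn|lt_nj|->].
- rewrite add0r (bigD1 (Ordinal lt_jn)) //= big1 => [|k]; last first.
    by rewrite -val_eqE eq_sym => /coef_neq.
  rewrite eqxx mulr1 addr0 comp_mpolyXU -tnth_nth.
  exact: (esym (prod_XsubX_coef (Ordinal lt_jn))).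
- rewrite add0r nth_default ?size_P // big1 // => k _; apply: coef_neq.
  by rewrite neq_ltn (ltn_trans (ltn_ord k) lt_nj) orbT.
- rewrite big1 ?addr0 => [|k _]; last by apply: coef_neq; rewrite neq_ltn ltn_ord orbT.
  by move/monicP: P_monic; rewrite /lead_coef size_P.
Qed.

End GenericPolynomial.

Section Bivariate.
Variable n : nat.
Local Notation bivariate := {poly {poly {mpoly rat[n]}}}.
Local Notation G := (generic_poly n).
Local Notation h := ((2%:R : rat)^-1)%:MP.

Definition bivariate_var (i : 'I_n.+2) : bivariate :=
  if insub (i : nat) is Some k then ('X_k)%:P%:P
  else if i == n :> nat then 'X%:P else 'X.

Definition to_bivariate : {rmorphism {mpoly rat[n.+2]} -> bivariate} :=
  mmap (polyC \o polyC \o @mpolyC n rat) bivariate_var.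

Definition of_bivariate : {rmorphism bivariate -> {mpoly rat[n.+2]}} :=
  eval2 (comp_mpoly (avars n)) (xvar n) (yvar n).

Lemma to_bivariateC c : to_bivariate c%:MP = (c%:MP)%:P%:P.
Proof. exact: mmapC. Qed.

Lemma to_bivariateX i : to_bivariate 'X_i = bivariate_var i.
Proof. by rewrite /= mmapX mmap1U. Qed.

Lemma to_bivariate_avar i : to_bivariate (avar i) = ('X_i)%:P%:P.
Proof.
rewrite to_bivariateX /bivariate_var inordK ?(ltn_trans (ltn_ord i)) //.
by rewrite insubT // => lt_in; congr ('X__)%:P%:P; apply: val_inj.
Qed.

Lemma to_bivariate_xvar : to_bivariate (xvar n) = 'X%:P.
Proof. by rewrite to_bivariateX /bivariate_var inordK // insubF ?ltnn ?eqxx. Qed.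

Lemma to_bivariate_yvar : to_bivariate (yvar n) = 'X.
Proof.
by rewrite to_bivariateX /bivariate_var inordK // insubF ?ltnNge ?leqnSn // gtn_eqF.
Qed.

Lemma of_bivariateCC p : of_bivariate p%:P%:P = p \mPo avars n.
Proof. exact: eval2CC. Qed.

Lemma to_bivariateK : cancel to_bivariate of_bivariate.
Proof.
apply: (@eq_rmorph_mpoly _ _ _ (of_bivariate \o to_bivariate) idfun) => [c|i].
  change (of_bivariate (to_bivariate c%:MP) = c%:MP).
  by rewrite to_bivariateC of_bivariateCC comp_mpolyC.
change (of_bivariate (to_bivariate 'X_i) = 'X_i).
rewrite to_bivariateX /bivariate_var; case: insubP => [k lt_in eq_ik|].
  rewrite of_bivariateCC comp_mpolyXU -tnth_nth tnth_mktuple /avar.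
  by congr 'X__; apply: val_inj; rewrite /= inordK ?eq_ik // (ltn_trans lt_in).
rewrite -leqNgt => le_ni; case: eqVneq => [eq_in|ne_in].
  by rewrite eval2XC /xvar; congr 'X__; apply: val_inj; rewrite /= inordK.
rewrite eval2X /yvar; congr 'X__; apply: val_inj; rewrite /= inordK //.
by have := ltn_ord i; lia.
Qed.

Lemma to_bivariate_fgen t : to_bivariate (fgen t) = G^:P \Po to_bivariate t.
Proof.
rewrite /fgen rmorphD rmorph_sum rmorphXn.
under eq_bigr do rewrite rmorphM rmorphXn to_bivariate_avar.
set T := to_bivariate t.
rewrite /comp_poly !rmorphD !rmorph_sum !rmorphXn /= !map_polyX hornerD horner_sum hornerXn.
congr (_ + _); apply: eq_bigr => i _.
by rewrite !rmorphM /= !map_polyC !map_polyXn hornerM hornerC hornerXn.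
Qed.

Lemma to_bivariate_f1 f1 : is_f1 f1 ->
  ('X - 'X%:P) * to_bivariate f1 = G^:P - G%:P.
Proof.
move/(congr1 to_bivariate); rewrite rmorphM !rmorphB !to_bivariate_fgen.
by rewrite to_bivariate_xvar to_bivariate_yvar comp_polyXr map_polyC_compXC.
Qed.

Lemma to_bivariateZ c p : to_bivariate (c *: p) = (c%:MP)%:P%:P * to_bivariate p.
Proof. by rewrite -mul_mpolyC rmorphM to_bivariateC. Qed.

Lemma to_bivariate_fgen_xvar : to_bivariate (fgen (xvar n)) = G%:P.
Proof. by rewrite to_bivariate_fgen to_bivariate_xvar map_polyC_compXC. Qed.

Lemma to_bivariate_f3 f3 : is_f3 f3 ->
  (h%:P%:P * ('X - 'X%:P) ^+ 2) * to_bivariate f3 =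
  G^:P - 2%:R * (G^:P \Po (h%:P%:P * ('X%:P + 'X))) + G%:P.
Proof.
move/(congr1 to_bivariate).
rewrite rmorphM to_bivariateZ rmorphXn rmorphB rmorphD rmorphB rmorphM rmorph_nat.
rewrite !to_bivariate_fgen to_bivariateZ [to_bivariate (_ + _)]rmorphD.
by rewrite to_bivariate_xvar to_bivariate_yvar comp_polyXr map_polyC_compXC.
Qed.

End Bivariate.

Unset Implicit Arguments.
Set Strict Implicit.

Theorem theorem4 (n : nat) (hn : (3 <= n)%N)
  (D2 : {mpoly rat[n]}) (f1 f3 : {mpoly rat[n.+2]}) :
  is_D2 D2 -> is_f1 f1 -> is_f3 f3 ->
  in_ideal3 (fgen (xvar n)) f1 f3 (D2 \mPo avars n) /\
  in_coeff_ring (D2 \mPo avars n).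
Proof.
move=> D2_roots /to_bivariate_f1 F1_def /to_bivariate_f3 F3_def; split; last by exists D2.
have n_gt0 : (0 < n)%N by apply: leq_trans hn.
have half : ((2%:R : rat)^-1)%:MP * 2%:R = 1 :> {mpoly rat[n]}.
  by rewrite -mpolyC_nat -mpolyCM mulVf ?pnatr_eq0.
have Pi_lift := sym_coef_poly_lift (f3_values_poly_coef_sym n (2%:R^-1)).
rewrite -[X in f3_values_poly _ X](comp_mpolyC _ (vieta n)) in Pi_lift.
have [u [v [w uvw]]] := root_prod_in_ideal (@vieta_inj n) (@mpolyX_inj n)
  (generic_poly_roots n) n_gt0 F1_def half F3_def D2_roots Pi_lift.
exists (of_bivariate n u), (of_bivariate n v), (of_bivariate n w).
rewrite -of_bivariateCC uvw -to_bivariate_fgen_xvar 2!rmorphD.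
by congr (_ + _ + _); rewrite rmorphM to_bivariateK.
Qed.
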